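(* For all $\nu\in\mathbb C$ and $x\in\mathbb C\setminus\{0\}$, the following identity holds as formal power series in $t$: $$\sum_{m=0}^\infty (xt)^m R_{m,\nu}(x;q)=\sum_{j=0}^\infty\frac{q^{j\nu}q^{j(j-1)/2}(-t)^j}{(t;q)_{j+1}\,(tx^2;q)_{j+1}}.$$
   Context: Fix $0<q<1$; $(a;q)_0=1$, $(a;q)_k=\prod_{i=0}^{k-1}(1-aq^i)$. The $q$-Lommel functions $R_{m,\nu}(x;q)$ are defined by $R_{-1,\nu}=0$, $R_{0,\nu}=1$ and $R_{m+1,\nu}(x;q)=\big(x+\frac{1-q^\nu}{x}\big)R_{m,\nu+1}(x;q)-R_{m-1,\nu+2}(x;q)$ for $m\ge0$. On the right-hand side each factor $1/(t;q)_{j+1}$, $1/(tx^2;q)_{j+1}$ is expanded as a power series in $t$. *)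

From mathcomp Require Import all_boot all_order all_algebra.
From mathcomp Require Import all_classical all_reals all_analysis.
From mathcomp Require Import complex.
Import Order.TTheory GRing.Theory Num.Theory ComplexField.

Set Implicit Arguments.
Unset Strict Implicit.
Unset Printing Implicit Defensive.

Local Open Scope ring_scope.
Local Open Scope complex_scope.

Section QLommel.
Variable R : realType.
Local Notation C := R[i].

Definition cpow (q : R) (z : C) : C :=
  let: u +i* v := z in
  let a : R := u * ln q in
  let b : R := v * ln q in
  (expR a * cos b) +i* (expR a * sin b).

(* lommel_pair q x m = (R_{m-1,.}, R_{m,.}) as functions of nu *)
Fixpoint lommel_pair (q : R) (x : C) (m : nat) : (C -> C) * (C -> C) :=
  match m with
  | 0 => (fun _ => 0, fun _ => 1)
  | m'.+1 =>
      let: (a, b) := lommel_pair q x m' in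
      (b, fun nu => (x + (1 - cpow q nu) / x) * b (nu + 1) - a (nu + 2))
  end.

Definition qLommel (q : R) (m : nat) (nu x : C) : C := (lommel_pair q x m).2 nu.

Definition fps := nat -> C.

Definition fps_of_poly (p : {poly C}) : fps := fun n => p`_n.

Definition fps_mul (f g : fps) : fps :=
  fun n => \sum_(k < n.+1) f k * g (n - k)%N.

Fixpoint fps_inv_seq (f : fps) (n : nat) : seq C :=
  match n with
  | 0 => [:: (f 0%N)^-1]
  | n'.+1 =>
      let s := fps_inv_seq f n' in
      rcons s (- (f 0%N)^-1 * \sum_(k < n'.+1) f k.+1 * nth 0 s (n' - k)%N)
  end.

Definition fps_inv (f : fps) : fps := fun n => nth 0 (fps_inv_seq f n) n.

Definition qpoch_t (a : C) (q : R) (k : nat) : {poly C} :=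
  \prod_(i < k) (1 - (a * (q ^+ i)%:C)%:P * 'X).

Definition lhs_series (q : R) (nu x : C) : fps :=
  fun m => x ^+ m * qLommel q m nu x.

(* j-th summand of the right-hand side, without the factor (-t)^j:
   q^{j nu} q^{j(j-1)/2} / ((t;q)_{j+1} (t x^2;q)_{j+1}) *)
Definition rhs_term (q : R) (nu x : C) (j : nat) : fps :=
  fun n => cpow q (j%:R * nu) * (q ^+ (j * (j - 1))./2)%:C *
    fps_mul (fps_inv (fps_of_poly (qpoch_t 1 q j.+1)))
            (fps_inv (fps_of_poly (qpoch_t (x ^+ 2) q j.+1))) n.

(* right-hand side: sum_{j>=0} (-t)^j * rhs_term j ; the j-th summand has
   t-adic order >= j, so the coefficient of t^n only involves j <= n. *)
Definition rhs_series (q : R) (nu x : C) : fps :=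
  fun n => \sum_(j < n.+1) (-1) ^+ j * rhs_term q nu x j (n - j)%N.

End QLommel.

(* Both sides, viewed as functions F_nu of nu, satisfy
     F_nu = 1 + (1 + x^2 - q^nu) t F_(nu+1) - x^2 t^2 F_(nu+2),
   which determines the coefficient of t^n from lower ones, so the two sides
   agree.  On the left this is the three-term recurrence of R_(m,nu).  On the
   right, (1 - q^j t)(1 - x^2 q^j t) = 1 - (1 + x^2) q^j t + x^2 q^(2j) t^2
   cancels the last factors of the j-th denominator, and the extra q^nu t
   produced by shifting nu reindexes the sum from j to j+1. *)

From HB Require Import structures.
From mathcomp Require Import all_boot all_order all_algebra.
From mathcomp Require Import all_classical all_reals all_analysis.
From mathcomp Require Import complex.
From mathcomp Require Import ring zify.
Import Order.TTheory GRing.Theory Num.Theory ComplexField.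
Local Open Scope ring_scope.

Set Implicit Arguments.
Unset Strict Implicit.
Unset Printing Implicit Defensive.

Section FormalPowerSeries.
Variable R : realType.
Local Notation C := R[i].
Implicit Types (f g h : fps R) (p r : {poly C}).

(* The n-th coefficient of a product only involves coefficients of index at
   most n, so the ring laws of fps_mul are inherited from {poly C}. *)
Definition fps_trunc n f : {poly C} := \poly_(i < n.+1) f i.

Lemma coef_fps_trunc n f k : (k <= n)%N -> (fps_trunc n f)`_k = f k.
Proof. by move=> le_kn; rewrite coef_poly ltnS le_kn. Qed.

Lemma fps_mul_coefM f g p r n :
    (forall k, (k <= n)%N -> f k = p`_k) -> (forall k, (k <= n)%N -> g k = r`_k) ->
  fps_mul f g n = (p * r)`_n.
Proof.
move=> fp gr; rewrite coefM; apply: eq_bigr => i _.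
by rewrite fp ?gr ?leq_subr // -ltnS.
Qed.

Lemma fps_mul_truncE f g n : fps_mul f g n = (fps_trunc n f * fps_trunc n g)`_n.
Proof. by apply: fps_mul_coefM => k le_kn; rewrite coef_fps_trunc. Qed.

Lemma fps_mulC f g : fps_mul f g = fps_mul g f.
Proof. by apply: funext => n; rewrite !fps_mul_truncE mulrC. Qed.

Lemma fps_mulA f g h : fps_mul f (fps_mul g h) = fps_mul (fps_mul f g) h.
Proof.
have trunc_mul f1 f2 n k : (k <= n)%N ->
    fps_mul f1 f2 k = (fps_trunc n f1 * fps_trunc n f2)`_k.
  by move=> le_kn; apply: fps_mul_coefM => i le_ik;
    rewrite coef_fps_trunc // (leq_trans le_ik).
apply: funext => n.
rewrite (@fps_mul_coefM _ _ (fps_trunc n f) (fps_trunc n g * fps_trunc n h)).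
- rewrite mulrA -(@fps_mul_coefM (fps_mul f g) h) // => k le_kn.
  + exact: trunc_mul.
  + by rewrite coef_fps_trunc.
- by move=> k le_kn; rewrite coef_fps_trunc.
- by move=> k le_kn; apply: trunc_mul.
Qed.

Lemma fps_of_polyM p r :
  fps_of_poly (p * r) = fps_mul (fps_of_poly p) (fps_of_poly r).
Proof. by apply: funext => n; rewrite (@fps_mul_coefM _ _ p r). Qed.

Lemma fps_mul1 f : fps_mul (fps_of_poly 1) f = f.
Proof.
apply: funext => n; rewrite (@fps_mul_coefM _ _ 1 (fps_trunc n f)) //.
  by rewrite mul1r coef_fps_trunc.
by move=> k le_kn; rewrite coef_fps_trunc.
Qed.

Lemma fps_mulACA f g h (k : fps R) :
  fps_mul (fps_mul f g) (fps_mul h k) = fps_mul (fps_mul f h) (fps_mul g k).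
Proof.
by rewrite -!fps_mulA [fps_mul g (fps_mul h k)]fps_mulA [fps_mul g h]fps_mulC
  -fps_mulA.
Qed.

Lemma fps_invE f n : fps_inv f n.+1 =
  - (f 0%N)^-1 * \sum_(k < n.+1) f k.+1 * fps_inv f (n - k)%N.
Proof.
have size_seq m : size (fps_inv_seq f m) = m.+1.
  by elim: m => //= m IH; rewrite size_rcons IH.
have nth_seq m k : (k <= m)%N -> nth 0 (fps_inv_seq f m) k = fps_inv f k.
  elim: m => [|m IH]; first by rewrite leqn0 => /eqP ->.
  rewrite leq_eqVlt => /predU1P[-> //|lt_km].
  by rewrite /= nth_rcons size_seq lt_km IH.
rewrite /fps_inv /= nth_rcons size_seq ltnn eqxx.
by congr (_ * _); apply: eq_bigr => k _; rewrite nth_seq ?leq_subr.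
Qed.

Lemma fps_mulV f : f 0%N != 0 -> fps_mul f (fps_inv f) = fps_of_poly 1.
Proof.
move=> f0_neq0; apply: funext => -[|n]; rewrite /fps_of_poly coef1 /fps_mul.
  by rewrite big_ord1 mulfV.
rewrite big_ord_recl subn0 fps_invE mulrA mulrN mulfV // mulN1r.
by under [X in _ + X]eq_bigr => k _ do rewrite lift0 subSS; rewrite addNr.
Qed.

Lemma fps_mul_inv_uniq f g : fps_mul f g = fps_of_poly 1 -> f 0%N != 0 ->
  g = fps_inv f.
Proof.
move=> fg f0_neq0.
by rewrite -[g]fps_mul1 -(fps_mulV f0_neq0) [fps_mul f _]fps_mulC -fps_mulA fg
  fps_mulC fps_mul1.
Qed.

Lemma fps_mul_invMK p r : p`_0 != 0 -> r`_0 != 0 ->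
  fps_mul (fps_of_poly r) (fps_inv (fps_of_poly (p * r))) = fps_inv (fps_of_poly p).
Proof.
move=> p0 r0; apply: fps_mul_inv_uniq => //.
have pr0 : fps_of_poly (p * r) 0%N != 0 by rewrite /fps_of_poly coef0M mulf_neq0.
by rewrite fps_mulA -fps_of_polyM fps_mulV.
Qed.

Lemma fps_inv1 : fps_inv (fps_of_poly (1 : {poly C})) = fps_of_poly 1.
Proof.
by apply/esym/fps_mul_inv_uniq; rewrite ?fps_mul1 // /fps_of_poly coef1 oner_neq0.
Qed.

Definition fps_shiftn (j : nat) f : fps R :=
  fun n => if (j <= n)%N then f (n - j)%N else 0.

Lemma fps_shiftn_is_linear j : linear (fps_shiftn j : (nat -> C) -> nat -> C).
Proof.
move=> a f g; apply: funext => n; rewrite /fps_shiftn !fctE.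
by case: ifP; rewrite ?scaler0 ?addr0.
Qed.

HB.instance Definition _ j := GRing.isLinear.Build C (nat -> C) (nat -> C) _
  (fps_shiftn j) (fps_shiftn_is_linear j).

Lemma fps_shiftn0 f : fps_shiftn 0 f = f.
Proof. by apply: funext => n; rewrite /fps_shiftn subn0. Qed.

Lemma fps_shiftnD i j f : fps_shiftn i (fps_shiftn j f) = fps_shiftn (i + j) f.
Proof.
apply: funext => n; rewrite /fps_shiftn.
case: (leqP i n) => [le_in|lt_ni]; last by rewrite leqNgt (leq_trans lt_ni) ?leq_addr.
by rewrite leq_subRL // subnDA.
Qed.

Lemma fps_shiftnC i j f : fps_shiftn i (fps_shiftn j f) = fps_shiftn j (fps_shiftn i f).
Proof. by rewrite !fps_shiftnD addnC. Qed.

Lemma fps_shiftn_eq j f g n : (forall m, (m + j <= n)%N -> f m = g m) ->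
  fps_shiftn j f n = fps_shiftn j g n.
Proof. by rewrite /fps_shiftn => fg; case: ifP => // le_jn; rewrite fg ?subnK. Qed.

Lemma fps_mul_1_subX (a : C) f :
  fps_mul (fps_of_poly (1 - a%:P * 'X)) f = f - a *: fps_shiftn 1 f.
Proof.
apply: funext => n.
rewrite (@fps_mul_coefM _ _ (1 - a%:P * 'X) (fps_trunc n f)) //; last first.
  by move=> k le_kn; rewrite coef_fps_trunc.
rewrite mulrBl mul1r coefB -mulrA coefCM coefXM coef_fps_trunc // !fctE /fps_shiftn.
by case: n => [|n] //=; rewrite ?mulr0 // coef_fps_trunc // subn1.
Qed.

End FormalPowerSeries.

Local Open Scope complex_scope.

Lemma cpowD (R : realType) (q : R) (a b : R[i]) :
  cpow q (a + b) = cpow q a * cpow q b.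
Proof.
case: a => a1 a2; case: b => b1 b2.
rewrite /cpow /= !mulrDl expRD cosD sinD; congr (_ +i* _); ring.
Qed.

Lemma cpow0 (R : realType) (q : R) : cpow q 0 = 1.
Proof. by rewrite /cpow /= !mul0r expR0 cos0 sin0 mulr1 mulr0. Qed.

Lemma cpow_nat (R : realType) (q : R) n : 0 < q -> cpow q n%:R = (q ^+ n)%:C.
Proof.
move=> q_gt0; elim: n => [|n IH]; first exact: cpow0.
rewrite -addn1 natrD cpowD IH exprD expr1 rmorphM /=; congr (_ * _).
by rewrite /cpow /= mul1r mul0r cos0 sin0 mulr1 mulr0 lnK.
Qed.

Section LommelRecurrence.
Variables (R : realType) (q : R) (x : R[i]).
Local Notation C := R[i].

Definition lommel_gf_rec (F : C -> fps R) := forall nu,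
  F nu = fps_of_poly 1 + (1 + x ^+ 2 - cpow q nu) *: fps_shiftn 1 (F (nu + 1))
         - x ^+ 2 *: fps_shiftn 2 (F (nu + 2)).

Lemma lommel_gf_rec_uniq F G : lommel_gf_rec F -> lommel_gf_rec G -> F = G.
Proof.
move=> recF recG; apply: funext => nu; apply: funext => n.
elim/ltn_ind: n nu => n IH nu; rewrite recF recG !fctE.
by congr (_ + _ *: _ - _ *: _); apply: fps_shiftn_eq => m le_mn; apply: IH;
  lia.
Qed.

Lemma qLommelSS m nu : qLommel q m.+2 nu x =
  (x + (1 - cpow q nu) / x) * qLommel q m.+1 (nu + 1) x - qLommel q m (nu + 2) x.
Proof. by rewrite /qLommel /=; case: (lommel_pair q x m). Qed.

Lemma lhs_series_rec : x != 0 -> lommel_gf_rec (fun nu => lhs_series q nu x).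
Proof.
move=> x_neq0 nu; apply: funext => n.
rewrite !fctE /fps_shiftn /lhs_series /fps_of_poly coef1 /GRing.scale /=.
case: n => [|[|m]] /=; rewrite ?subn1 ?subn2 /=.
- by rewrite /qLommel /= !mulr0 addr0 subr0 mulr1.
- by rewrite /qLommel /= !mulr0 subr0 add0r !mulr1 subr0; field.
- by rewrite add0r qLommelSS !exprS; field.
Qed.

End LommelRecurrence.

Lemma qpoch_tS (R : realType) (a : R[i]) (q : R) k :
  qpoch_t a q k.+1 = qpoch_t a q k * (1 - (a * (q ^+ k)%:C)%:P * 'X).
Proof. by rewrite /qpoch_t big_ord_recr. Qed.

Lemma qpoch_t_coef0 (R : realType) (a : R[i]) (q : R) k : (qpoch_t a q k)`_0 = 1.
Proof.
rewrite -horner_coef0 /qpoch_t horner_prod big1 // => i _.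
by rewrite !hornerE subr0.
Qed.

Section RightHandSide.
Variables (R : realType) (q : R) (x : R[i]).
Hypothesis q_gt0 : 0 < q.
Local Notation C := R[i].

Definition inv_qpoch_prod (j : nat) : fps R :=
  fps_mul (fps_inv (fps_of_poly (qpoch_t 1 q j)))
          (fps_inv (fps_of_poly (qpoch_t (x ^+ 2) q j))).

Lemma inv_qpoch_prod0 : inv_qpoch_prod 0 = fps_of_poly 1.
Proof. by rewrite /inv_qpoch_prod /qpoch_t !big_ord0 fps_inv1 fps_mul1. Qed.

Lemma inv_qpoch_prodS j :
  inv_qpoch_prod j.+1 - ((1 + x ^+ 2) * (q ^+ j)%:C) *: fps_shiftn 1 (inv_qpoch_prod j.+1)
    + (x ^+ 2 * (q ^+ j)%:C ^+ 2) *: fps_shiftn 2 (inv_qpoch_prod j.+1)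
  = inv_qpoch_prod j.
Proof.
set a := (q ^+ j)%:C; set F := inv_qpoch_prod j.+1.
have factor_out : fps_mul (fps_of_poly (1 - (1 * a)%:P * 'X))
    (fps_mul (fps_of_poly (1 - (x ^+ 2 * a)%:P * 'X)) F) = inv_qpoch_prod j.
  have coef0_lin c : (1 - c%:P * 'X : {poly C})`_0 != 0.
    by rewrite coefB coef1 coefCM coefX mulr0 subr0 oner_neq0.
  rewrite /F /inv_qpoch_prod fps_mulA -fps_of_polyM fps_of_polyM fps_mulACA.
  by rewrite !qpoch_tS !fps_mul_invMK ?qpoch_t_coef0 ?oner_neq0.
rewrite -factor_out !fps_mul_1_subX.
apply: funext => -[|[|n]]; rewrite /fps_shiftn !fctE /GRing.scale /=; ring.
Qed.

Definition rhs_coef (nu : C) (j : nat) : C :=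
  (-1) ^+ j * cpow q (j%:R * nu) * (q ^+ 'C(j, 2))%:C.

Definition rhs_summand (nu : C) (j : nat) : fps R :=
  fps_shiftn j (rhs_coef nu j *: inv_qpoch_prod j.+1).

Definition rhs_partial_sum (N : nat) (nu : C) : fps R :=
  \sum_(j < N) rhs_summand nu j.

Lemma rhs_seriesE nu n N : (n < N)%N ->
  rhs_series q nu x n = rhs_partial_sum N nu n.
Proof.
move=> lt_nN; rewrite /rhs_partial_sum fct_sumE -(subnKC lt_nN) big_split_ord /=.
rewrite [X in _ = _ + X]big1 ?addr0 => [|j _]; last first.
  by rewrite /rhs_summand /fps_shiftn leqNgt ltnS leq_addr.
apply: eq_bigr => j _; rewrite /rhs_summand /fps_shiftn -ltnS ltn_ord !fctE.
by rewrite /rhs_term /rhs_coef /inv_qpoch_prod bin2 -subn1 /GRing.scale /= !mulrA.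
Qed.

Lemma rhs_coef_shift nu j k :
  rhs_coef (nu + k%:R) j = rhs_coef nu j * (q ^+ j)%:C ^+ k.
Proof.
rewrite /rhs_coef mulrDr -natrM cpowD cpow_nat // exprM rmorphXn /=; ring.
Qed.

Lemma rhs_coefS nu j : rhs_coef nu j.+1 = - cpow q nu * rhs_coef (nu + 1) j.
Proof.
rewrite -[1]/(1%:R) rhs_coef_shift /rhs_coef binS bin1 exprD rmorphM /=.
rewrite -addn1 natrD mulrDl mul1r cpowD exprD expr1; ring.
Qed.

Lemma rhs_summand_rec nu j :
  rhs_summand nu j - (1 + x ^+ 2) *: fps_shiftn 1 (rhs_summand (nu + 1) j)
    + x ^+ 2 *: fps_shiftn 2 (rhs_summand (nu + 2) j)
  = if j is j'.+1 then - cpow q nu *: fps_shiftn 1 (rhs_summand (nu + 1) j')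
    else fps_of_poly 1.
Proof.
set A := inv_qpoch_prod j.+1; set c := rhs_coef nu j; set a := (q ^+ j)%:C.
have -> : rhs_summand (nu + 1) j = fps_shiftn j ((c * a) *: A).
  by rewrite /rhs_summand -[1]/(1%:R) rhs_coef_shift expr1.
have -> : rhs_summand (nu + 2) j = fps_shiftn j ((c * a ^+ 2) *: A).
  by rewrite /rhs_summand rhs_coef_shift.
have -> : rhs_summand nu j - (1 + x ^+ 2) *: fps_shiftn 1 (fps_shiftn j ((c * a) *: A))
    + x ^+ 2 *: fps_shiftn 2 (fps_shiftn j ((c * a ^+ 2) *: A))
    = fps_shiftn j (c *: (A - ((1 + x ^+ 2) * a) *: fps_shiftn 1 A
                         + (x ^+ 2 * a ^+ 2) *: fps_shiftn 2 A)).
  rewrite /rhs_summand !(fps_shiftnC _ j) [RHS](linearZ_LR (fps_shiftn j)).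
  rewrite (linearD (fps_shiftn j)) (linearB (fps_shiftn j)).
  rewrite (linearZ_LR (fps_shiftn 1)) (linearZ_LR (fps_shiftn 2)) !(linearZ_LR (fps_shiftn j)).
  by apply: funext => n; rewrite /c /A !fctE /GRing.scale /= !fctE /GRing.scale /=; ring.
rewrite inv_qpoch_prodS; case: j @A @c @a => [|j] A c a.
  by rewrite /c /rhs_coef fps_shiftn0 inv_qpoch_prod0 !mul0r cpow0 !mul1r scale1r.
by rewrite /c rhs_coefS -scalerA (linearZ_LR (fps_shiftn j.+1)) /rhs_summand fps_shiftnD.
Qed.

Lemma rhs_partial_sum_rec N nu :
  rhs_partial_sum N.+1 nu
    - (1 + x ^+ 2) *: fps_shiftn 1 (rhs_partial_sum N.+1 (nu + 1))
    + x ^+ 2 *: fps_shiftn 2 (rhs_partial_sum N.+1 (nu + 2))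
  = fps_of_poly 1 - cpow q nu *: fps_shiftn 1 (rhs_partial_sum N (nu + 1)).
Proof.
rewrite /rhs_partial_sum !(raddf_sum (fps_shiftn _)) !scaler_sumr -sumrB -big_split /=.
under eq_bigr do rewrite rhs_summand_rec.
by rewrite big_ord_recl /= -sumrN; under eq_bigr do rewrite add0n scaleNr.
Qed.

Lemma rhs_series_rec : lommel_gf_rec q x (fun nu => rhs_series q nu x).
Proof.
move=> nu; apply: funext => n.
have shiftE j N nu' : (n <= N)%N -> (0 < j)%N ->
    fps_shiftn j (rhs_partial_sum N nu') n = fps_shiftn j (rhs_series q nu' x) n.
  move=> le_nN j_gt0; apply: fps_shiftn_eq => m le_m.
  by rewrite (@rhs_seriesE _ _ N) //; lia.
have := congr1 (fun f => f n) (rhs_partial_sum_rec n nu).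
rewrite !fctE !shiftE ?leqnSn // -(@rhs_seriesE nu n n.+1) // /GRing.scale /=.
set B := fps_shiftn 1 _ n; set D := fps_shiftn 2 _ n => rec.
have -> : rhs_series q nu x n =
    (rhs_series q nu x n - (1 + x ^+ 2) * B + x ^+ 2 * D) + (1 + x ^+ 2) * B - x ^+ 2 * D.
  by ring.
by rewrite rec; ring.
Qed.

End RightHandSide.

Theorem mainTheorem14 (R : realType) (q : R) (hq0 : 0 < q) (hq1 : q < 1)
  (nu x : R[i]) (hx : x != 0) :
  lhs_series q nu x = rhs_series q nu x.
Proof.
have := lommel_gf_rec_uniq (lhs_series_rec q hx) (rhs_series_rec x hq0).
by move/(congr1 (fun F => F nu)).
Qed.
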